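(* Consider a Fragile multi-CPR Game $G^{(2)}$ with $n\ge1$ players and $m\ge1$ CPRs satisfying the Assumption below, with constraint policies $\vartheta_i$ as defined below, and assume $m\le n$. Let $\mathcal{N}(G^{(2)})\subset\mathcal{C}_n\subset\mathbb{R}^{nm}$ be the set of all Generalized Nash equilibria of $G^{(2)}$. Then the $(n\cdot m)$-dimensional Lebesgue measure of $\mathcal{N}(G^{(2)})$ is zero.
   Context: Let $[k]=\{1,\dots,k\}$. Let $C_m=\{(x_1,\dots,x_m)\in[0,1]^m:\sum_{j}x_j\le1\}$, $\mathcal{C}_n=\prod_{i\in[n]}C_m$, $\mathcal{C}_{-i}=\prod_{[n]\setminus\{i\}}C_m$. A strategy profile is $\mathbf{x}=(\mathbf{x}_1,\dots,\mathbf{x}_n)\in\mathcal{C}_n$, $\mathbf{x}_i=(x_{i1},\dots,x_{im})$; write $\mathbf{x}=(\mathbf{x}_i,\mathbf{x}_{-i})$. Put $\mathbf{x}_T^{(j)}=\sum_{i}x_{ij}$, $\mathbf{x}_T^{j|i}=\sum_{\ell\ne i}x_{\ell j}$. Each CPR $j$ has a return rate $\mathcal{R}_j(t)>1$ and failure probability $p_j(t)\in[0,1]$; each player $i$ has parameters $a_i,k_i$. Effective rate: $\mathcal{F}_{ij}(t)=(\mathcal{R}_j(t)-1)^{a_i}(1-p_j(t))-k_ip_j(t)$; utility: $\mathcal{V}_i(\mathbf{x}_i;\mathbf{x}_{-i})=\sum_j x_{ij}^{a_i}\mathcal{F}_{ij}(\mathbf{x}_T^{(j)})$. Assumption: (1)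 $p_j(0)=0$, $p_j(t)=1$ for $t\ge1$; (2) $a_i\in(0,1]$, $k_i>0$; (3) each $\mathcal{F}_{ij}$ (continuous on $[0,1]$) has strictly negative first and second derivatives on $(0,1)$. Let $\omega_{ij}\in(0,1)$ be the unique zero of $\mathcal{F}_{ij}$ in $(0,1)$. Active CPRs: $A(\mathbf{x}_{-i})=\{j:\mathbf{x}_T^{j|i}<\omega_{ij}\}$. Constraint policy: $\vartheta_i(\mathbf{x}_{-i})=C_m\cap\big(\prod_{j\in A(\mathbf{x}_{-i})}[0,\omega_{ij}-\mathbf{x}_T^{j|i}]\times\prod_{j\notin A(\mathbf{x}_{-i})}\{0\}\big)$. A Generalized Nash equilibrium is $\mathbf{x}^*\in\mathcal{C}_n$ with, for all $i$, $\mathbf{x}^*_i\in\vartheta_i(\mathbf{x}^*_{-i})$ and $\mathcal{V}_i(\mathbf{x}^*_i;\mathbf{x}^*_{-i})\ge\mathcal{V}_i(\mathbf{y};\mathbf{x}^*_{-i})$ for all $\mathbf{y}\in\vartheta_i(\mathbf{x}^*_{-i})$. *)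

From HB Require Import structures.
From mathcomp Require Import all_boot all_order all_algebra.
From mathcomp Require Import all_classical all_reals all_analysis.
Set Implicit Arguments. Unset Strict Implicit. Unset Printing Implicit Defensive.
Import Order.TTheory GRing.Theory Num.Theory numFieldNormedType.Exports.
Local Open Scope classical_set_scope.
Local Open Scope ring_scope.

Section FragileGame.
Variables (R : realType) (n m : nat).

Definition Cm (y : 'I_m -> R) : Prop :=
  (forall j, 0 <= y j <= 1) /\ \sum_(j < m) y j <= 1.

(* strategy profiles are n x m matrices, row i = x_i *)
Definition Cn (x : 'M[R]_(n, m)) : Prop := forall i, Cm (fun j => x i j).

Definition xT (x : 'M[R]_(n, m)) (j : 'I_m) : R := \sum_(l < n) x l j.
Definition xT_excl (x : 'M[R]_(n, m)) (i : 'I_n) (j : 'I_m) : R :=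
  \sum_(l < n | l != i) x l j.

Definition Feff (Rr p : 'I_m -> R -> R) (a k : 'I_n -> R)
  (i : 'I_n) (j : 'I_m) (t : R) : R :=
  (Rr j t - 1) `^ (a i) * (1 - p j t) - k i * p j t.

Definition omega (Rr p : 'I_m -> R -> R) (a k : 'I_n -> R)
  (i : 'I_n) (j : 'I_m) : R :=
  xget 0 [set w : R | 0 < w < 1 /\ Feff Rr p a k i j w = 0].

Definition utility (Rr p : 'I_m -> R -> R) (a k : 'I_n -> R)
  (i : 'I_n) (y : 'I_m -> R) (x : 'M[R]_(n, m)) : R :=
  \sum_(j < m) (y j) `^ (a i) * Feff Rr p a k i j (y j + xT_excl x i j).

Definition active (Rr p : 'I_m -> R -> R) (a k : 'I_n -> R)
  (x : 'M[R]_(n, m)) (i : 'I_n) (j : 'I_m) : Prop :=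
  xT_excl x i j < omega Rr p a k i j.

Definition vartheta (Rr p : 'I_m -> R -> R) (a k : 'I_n -> R)
  (i : 'I_n) (x : 'M[R]_(n, m)) : set ('I_m -> R) :=
  [set y | Cm y /\
     forall j, (active Rr p a k x i j ->
                  0 <= y j <= omega Rr p a k i j - xT_excl x i j) /\
               (~ active Rr p a k x i j -> y j = 0)].

Definition GNE (Rr p : 'I_m -> R -> R) (a k : 'I_n -> R) : set 'M[R]_(n, m) :=
  [set x | Cn x /\ forall i : 'I_n,
     vartheta Rr p a k i x (fun j => x i j) /\
     forall y, vartheta Rr p a k i x y ->
       utility Rr p a k i y x <= utility Rr p a k i (fun j => x i j) x].

(* Lebesgue null sets of R^{n*m} (coordinates indexed by 'I_n x 'I_m):
   S has Lebesgue (outer) measure zero iff for every eps > 0 it is covered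
   by countably many closed boxes of total volume at most eps. *)
Definition box (lo hi : 'M[R]_(n, m)) : set 'M[R]_(n, m) :=
  [set x | forall i j, lo i j <= x i j <= hi i j].
Definition box_vol (lo hi : 'M[R]_(n, m)) : R :=
  \prod_(i < n) \prod_(j < m) (hi i j - lo i j).
Definition lebesgue_null (S : set 'M[R]_(n, m)) : Prop :=
  forall eps : R, 0 < eps ->
    exists lo hi : nat -> 'M[R]_(n, m),
      (forall q i j, lo q i j <= hi q i j) /\
      S `<=` \bigcup_q box (lo q) (hi q) /\
      (forall N, \sum_(q < N) box_vol (lo q) (hi q) <= eps).

End FragileGame.

From HB Require Import structures.
From mathcomp Require Import all_boot all_order all_algebra.
From mathcomp Require Import all_classical all_reals all_analysis.
From mathcomp Require Import lra ring.

(* A generalized Nash equilibrium either has a vanishing coordinate, or has a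
   player who invests his whole budget, or is interior.  In the interior, the
   first-order condition of player i at CPR j gives x_ij = share_ij(x_T^(j)),
   where share_ij is nonincreasing because F_ij is positive, decreasing and
   concave below omega_ij; summing over i, x_T^(j) is a fixed point of a
   nonincreasing map, hence a constant, and so is every x_ij.  Therefore the
   equilibria lie on finitely many graphs of Lipschitz functions of the other
   coordinates over the unit cube, and such a graph is covered, for a grid of
   mesh 1/N, by boxes of total volume O(1/N). *)

Set Implicit Arguments. Unset Strict Implicit. Unset Printing Implicit Defensive.
Import Order.TTheory GRing.Theory Num.Theory numFieldNormedType.Exports.
Local Open Scope classical_set_scope.
Local Open Scope ring_scope.

Section NullSets.
Variable R : realType.

Lemma sum_nth_le (s : seq R) K : (forall x, x \in s -> 0 <= x) ->
  \sum_(q < K) s`_q <= \sum_(x <- s) x.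
Proof.
elim: s K => [|x s IH] K s_ge0.
  by rewrite big_nil big1 // => q _; rewrite nth_nil.
case: K => [|K].
  by rewrite big_ord0 big_seq; apply: sumr_ge0 => y ys; apply: s_ge0.
rewrite big_ord_recl big_cons /=; apply: lerD => //.
by apply: IH => y ys; apply: s_ge0; rewrite in_cons ys orbT.
Qed.

Lemma box_vol00 n m : (0 < n)%N -> (0 < m)%N ->
  box_vol (0 : 'M[R]_(n, m)) 0 = 0.
Proof.
move=> n_gt0 m_gt0; rewrite /box_vol (eq_bigr (fun _ => 0)).
  by rewrite prodr_const card_ord expr0n eqn0Ngt n_gt0.
move=> i _; rewrite (eq_bigr (fun _ => 0)); last by move=> j _; rewrite mxE subrr.
by rewrite prodr_const card_ord expr0n eqn0Ngt m_gt0.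
Qed.

Lemma lebesgue_null_finite_covers n m (S : set 'M[R]_(n, m)) :
  (0 < n)%N -> (0 < m)%N ->
  (forall eps : R, 0 < eps -> exists (I : finType) (lo hi : I -> 'M[R]_(n, m)),
     [/\ forall z i j, lo z i j <= hi z i j,
         forall x, S x -> exists z, box (lo z) (hi z) x
       & \sum_z box_vol (lo z) (hi z) <= eps]) ->
  lebesgue_null S.
Proof.
move=> n_gt0 m_gt0 covers eps eps_gt0.
have [I [lo [hi [lo_hi cover vol]]]] := covers eps eps_gt0.
pose s := index_enum I.
exists (fun q => (map lo s)`_q), (fun q => (map hi s)`_q); split; [|split].
- move=> q i j; elim: s q => [|z s IH] [|q] //=; by rewrite nth_nil mxE.
- move=> x /cover[z xz]; exists (index z s) => //.
  by rewrite !(nth_map z) ?nth_index ?index_mem ?mem_index_enum.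
- move=> K; apply: le_trans vol.
  (* Past the end of the enumeration, nth gives the degenerate box [0, 0]. *)
  have volsE q : box_vol (map lo s)`_q (map hi s)`_q =
                 (map (fun z => box_vol (lo z) (hi z)) s)`_q.
    elim: s q => [|z s' IH] [|q] //=; exact: box_vol00.
  under eq_bigr => q _ do rewrite volsE.
  rewrite [X in _ <= X](_ : _ = \sum_(v <- map (fun z => box_vol (lo z) (hi z)) s) v);
    last by rewrite big_map.
  apply: sum_nth_le => _ /mapP[z _ ->].
  apply: prodr_ge0 => i _; apply: prodr_ge0 => j _; rewrite subr_ge0; exact: lo_hi.
Qed.

End NullSets.

Section GridCells.
Variables (R : realType) (n m N : nat) (T : finType).
Variables (c : T -> 'I_n * 'I_m) (f : T -> 'M[R]_(n, m) -> R) (L : R).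
Hypothesis L_ge0 : 0 <= L.
Hypothesis f_lipschitz : forall t (x y : 'M[R]_(n, m)) d, 0 <= d ->
  (forall i j, (i, j) != c t -> `|x i j - y i j| <= d) -> `|f t x - f t y| <= L * d.

Let Nr : R := N.+1%:R.
Let Nr_gt0 : 0 < Nr. Proof. exact: ltr0Sn. Qed.

Local Notation grid := {ffun 'I_n * 'I_m -> 'I_N.+1}.

Definition grid_index (y : R) : 'I_N.+1 := inord (minn (Num.truncn (y * Nr)) N).

Lemma grid_index_bounds y : 0 <= y <= 1 ->
  (grid_index y)%:R / Nr <= y <= (grid_index y).+1%:R / Nr.
Proof.
move=> /andP[y_ge0 y_le1]; rewrite /grid_index inordK ?ltnS ?geq_minr //.
have /andP[trunc_le lt_trunc] := Num.Theory.truncn_itv (mulr_ge0 y_ge0 (ltW Nr_gt0)).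
rewrite ler_pdivrMr // ler_pdivlMr //.
case: (leqP (Num.truncn (y * Nr)) N) => [_|lt_N_trunc].
  by rewrite trunc_le ltW.
apply/andP; split.
  by apply: le_trans trunc_le; rewrite ler_nat ltnW.
by rewrite ler_piMl // ltW.
Qed.

Definition grid_point (u : grid) : 'M[R]_(n, m) :=
  \matrix_(i, j) ((u (i, j))%:R / Nr).

(* The cell of (t, u) is the grid cube of u, except along c t where it is the
   interval f t (grid_point u) +- L / Nr; only u (c t) = 0 gets this interval,
   the other values of u (c t) give degenerate cells, so that cells are indexed
   by a plain product type. *)
Definition cell_lo (z : T * grid) : 'M[R]_(n, m) := \matrix_(i, j)
  if (i, j) == c z.1 then
    (if z.2 (i, j) == ord0 then f z.1 (grid_point z.2) - L / Nr else 0)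
  else (z.2 (i, j))%:R / Nr.

Definition cell_hi (z : T * grid) : 'M[R]_(n, m) := \matrix_(i, j)
  if (i, j) == c z.1 then
    (if z.2 (i, j) == ord0 then f z.1 (grid_point z.2) + L / Nr else 0)
  else (z.2 (i, j)).+1%:R / Nr.

Lemma cell_lo_hi z i j : cell_lo z i j <= cell_hi z i j.
Proof.
have L_Nr_ge0 : 0 <= L / Nr by rewrite divr_ge0 // ltW.
rewrite !mxE; case: ifP => _; last by rewrite ler_pM2r ?invr_gt0 // ler_nat.
by case: ifP => _ //; rewrite lerD2l (le_trans _ L_Nr_ge0) // oppr_le0.
Qed.

Lemma cell_cover t (x : 'M[R]_(n, m)) : (forall i j, 0 <= x i j <= 1) ->
  x (c t).1 (c t).2 = f t x -> exists z, box (cell_lo z) (cell_hi z) x.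
Proof.
move=> x01 x_graph.
pose u : grid := [ffun p => if p == c t then ord0 else grid_index (x p.1 p.2)].
have u_cell i j : (i, j) != c t ->
    (u (i, j))%:R / Nr <= x i j <= (u (i, j)).+1%:R / Nr.
  by move=> /negbTE ij_ne; rewrite ffunE ij_ne; exact: grid_index_bounds.
exists (t, u) => i j; rewrite !mxE /=.
have [ij_eq|] := eqVneq (i, j) (c t); last exact: u_cell.
rewrite ffunE ij_eq !eqxx -ler_distl.
have [-> ->] : i = (c t).1 /\ j = (c t).2 by rewrite -ij_eq.
rewrite x_graph; apply: f_lipschitz; first by rewrite invr_ge0 ltW.
move=> i' j' /u_cell /andP[lo_x x_hi]; rewrite mxE ler_distl.
rewrite -natr1 mulrDl mul1r in x_hi.
by rewrite x_hi andbT (le_trans _ lo_x) // gerBl invr_ge0 ltW.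
Qed.

Lemma cells_vol : \sum_(z : T * grid) box_vol (cell_lo z) (cell_hi z) =
  #|T|%:R * (L / Nr + L / Nr).
Proof.
pose side t p (l : 'I_N.+1) : R :=
  if p == c t then (if l == ord0 then L / Nr + L / Nr else 0) else Nr^-1.
have volE z : box_vol (cell_lo z) (cell_hi z) = \prod_p side z.1 p (z.2 p).
  rewrite /box_vol pair_bigA /=; apply: eq_bigr => -[i j] _ /=.
  rewrite !mxE /side; case: ifP => _; last first.
    by rewrite -natr1 mulrDl mul1r addrAC subrr add0r.
  by case: ifP => _; rewrite ?subrr // opprB addrC addrA subrK.
rewrite (eq_bigr _ (fun z _ => volE z)).
rewrite -(pair_bigA _ (fun t (u : grid) => \prod_p side t p (u p))).
rewrite /= (eq_bigr (fun _ => L / Nr + L / Nr)) ?sumr_const ?card_ord ?mulr_natl //.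
move=> t _; rewrite -bigA_distr_bigA /= (bigD1 (c t)) //= [X in _ * X]big1 ?mulr1.
  by rewrite (bigD1 ord0) //= big1 ?addr0 /side ?eqxx // => l /negbTE ->.
move=> p /negbTE p_ne; rewrite /side p_ne sumr_const card_ord.
by rewrite -mulr_natl mulfV // gt_eqF.
Qed.

End GridCells.

Lemma lebesgue_null_graphs (R : realType) n m (T : finType)
    (c : T -> 'I_n * 'I_m) (f : T -> 'M[R]_(n, m) -> R) (L : R)
    (S : set 'M[R]_(n, m)) :
  (0 < n)%N -> (0 < m)%N -> 0 <= L ->
  (forall t (x y : 'M[R]_(n, m)) d, 0 <= d ->
     (forall i j, (i, j) != c t -> `|x i j - y i j| <= d) ->
     `|f t x - f t y| <= L * d) ->
  (forall x, S x -> (forall i j, 0 <= x i j <= 1) /\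
     exists t, x (c t).1 (c t).2 = f t x) ->
  lebesgue_null S.
Proof.
move=> n_gt0 m_gt0 L_ge0 f_lip S_graphs.
apply: lebesgue_null_finite_covers => // eps eps_gt0.
pose N := Num.truncn ((L + L) * #|T|%:R / eps).
have N_large : (L + L) * #|T|%:R / eps < N.+1%:R.
  by have /andP[] := Num.Theory.truncn_itv (divr_ge0 (mulr_ge0 (addr_ge0 L_ge0 L_ge0)
    (ler0n _ #|T|)) (ltW eps_gt0)).
exists (T * {ffun 'I_n * 'I_m -> 'I_N.+1})%type,
  (cell_lo (N:=N) c f L), (cell_hi (N:=N) c f L).
split; first exact: cell_lo_hi.
  by move=> x /S_graphs[x01 [t x_graph]]; exact: (cell_cover N f_lip x01 x_graph).
rewrite cells_vol -mulrDl mulrA ler_pdivrMr ?ltr0Sn // mulrC [eps * _]mulrC.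
by rewrite ltr_pdivrMr // in N_large; exact: ltW.
Qed.

Lemma fixpoint_unique_nonincr (R : realDomainType) (A : set R) (G : R -> R) r s :
  (forall u v, A u -> A v -> u < v -> G v <= G u) ->
  A r -> A s -> r = G r -> s = G s -> r = s.
Proof.
move=> G_nonincr; wlog r_lt_s : r s / r < s.
  move=> wlog_lt Ar As rG sG; case: (ltgtP r s) => [rs|sr|//].
    exact: wlog_lt.
  exact/esym/wlog_lt.
move=> Ar As rG sG; have := G_nonincr r s Ar As r_lt_s.
by rewrite -rG -sG leNgt r_lt_s.
Qed.

Lemma dist_sum_neq_le (R : numDomainType) m (u v : 'I_m -> R) j0 d :
  0 <= d -> (forall j, j != j0 -> `|u j - v j| <= d) ->
  `|\sum_(j | j != j0) u j - \sum_(j | j != j0) v j| <= m%:R * d.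
Proof.
move=> d_ge0 uv_close; rewrite -sumrB (le_trans (ler_norm_sum _ _ _)) //.
rewrite (le_trans (ler_sum _ uv_close)) // sumr_const -[d *+ _]mulr_natl.
rewrite ler_wpM2r // ler_nat.
by rewrite (leq_trans (subset_leq_card (subset_predT _))) ?card_ord.
Qed.

Section DecreasingConcave.
Variables (R : realType) (F : R -> R).
Hypothesis F_cont : {within `[0, 1], continuous F}.
Hypothesis F_derivable : forall t, 0 < t < 1 -> derivable F t 1.
Hypothesis F'_lt0 : forall t, 0 < t < 1 -> derive1 F t < 0.

Lemma F_decr r s : 0 <= r -> r < s -> s <= 1 -> F s < F r.
Proof.
move=> r_ge0 rs s_le1; apply: ltr0_derive1_lt_cc => //.
- by move=> t; rewrite in_itv => /F_derivable.
- by move=> t; rewrite in_itv => /F'_lt0.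
- by rewrite in_itv /= s_le1 (le_trans r_ge0) ?ltW.
- by rewrite in_itv /= r_ge0 (le_trans _ s_le1) ?ltW.
Qed.

Lemma powR_mulF_max_stationary (e c x b : R) :
  0 < e -> 0 <= c -> 0 < x -> x < b -> b + c <= 1 ->
  (forall t, 0 < t -> t < b -> t `^ e * F (t + c) <= x `^ e * F (x + c)) ->
  e * F (x + c) + x * derive1 F (x + c) = 0.
Proof.
move=> e_gt0 c_ge0 x_gt0 x_lt_b bc_le1 x_max.
pose psi := (@powR R ^~ e) * (F \o shift c).
have psi_deriv t : 0 < t -> t < b -> is_derive t 1 psi
    (t `^ e *: (derive1 F (t + c) * 1) + F (t + c) *: (e * t `^ (e - 1))).
  move=> t_gt0 t_lt_b; apply: is_deriveM; first exact: is_derive1_powR.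
  apply: is_derive1_comp; last exact: is_derive_shift.
  have /F_derivable F_derivable_tc : 0 < t + c < 1 by apply/andP; split; lra.
  by rewrite derive1E; exact: derivableP.
have psi'x0 : is_derive x 1 psi 0.
  apply: (@derive1_at_max _ psi 0 b x); rewrite ?in_itv /= ?x_gt0 ?x_lt_b //.
  - exact: ltW (lt_trans x_gt0 x_lt_b).
  - by move=> t /andP[t_gt0 t_lt_b]; have [] := psi_deriv t t_gt0 t_lt_b.
  - by move=> t /andP[t_gt0 t_lt_b]; rewrite /psi !mulrfctE /=; exact: x_max.
have psi'x_eq : 0 = x `^ e * (derive1 F (x + c) * 1) + F (x + c) * (e * x `^ (e - 1)) :=
  etrans (esym (@derive_val _ _ _ _ _ _ _ psi'x0))
    (@derive_val _ _ _ _ _ _ _ (psi_deriv x x_gt0 x_lt_b)).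
have x_neq0 : (e == 1) ==> (x != 0) by rewrite (gt_eqF x_gt0) implybT.
move: psi'x_eq; rewrite (powRB x_neq0) powRr1 ?ltW // => /(congr1 ( *%R (x / x `^ e))).
rewrite mulr0 => ->; field.
by rewrite !gt_eqF ?powR_gt0.
Qed.

Hypothesis F'_derivable : forall t, 0 < t < 1 -> derivable (derive1 F) t 1.
Hypothesis F''_lt0 : forall t, 0 < t < 1 -> derive1 (derive1 F) t < 0.

Lemma derive1F_decr r s : 0 < r -> r < s -> s < 1 -> derive1 F s < derive1 F r.
Proof.
move=> r_gt0 rs s_lt1; apply: (@ltr0_derive1_lt_oo _ _ 0 1) => //.
- move=> t; rewrite inE /= in_itv => /F'_derivable.
  by rewrite derivable1_diffP => /differentiable_continuous.
- by rewrite in_itv /= s_lt1 (lt_trans r_gt0).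
- by rewrite in_itv /= r_gt0 (lt_trans rs).
Qed.

Hypothesis F0_gt0 : 0 < F 0.
Hypothesis F1_lt0 : F 1 < 0.

Definition zero01 : R := xget 0 [set w : R | 0 < w < 1 /\ F w = 0].

Lemma zero01_spec : 0 < zero01 < 1 /\ F zero01 = 0.
Proof.
apply: (xgetPex 0 (P := [set w : R | 0 < w < 1 /\ F w = 0])).
have [w] : exists2 w, w \in `[0, 1] & F w = 0.
  apply: IVT; [exact: ler01 | exact: F_cont | ].
  by rewrite ge_min le_max (ltW F1_lt0) (ltW F0_gt0) orbT.
rewrite in_itv /= => /andP[w_ge0 w_le1] Fw0; exists w; split => //.
rewrite !lt_neqAle w_ge0 w_le1 !andbT; apply/andP; split; apply/eqP => w_eq.
  by move: F0_gt0; rewrite -w_eq in Fw0; rewrite Fw0 ltxx.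
by move: F1_lt0; rewrite w_eq in Fw0; rewrite Fw0 ltxx.
Qed.

Lemma F_gt0 t : 0 <= t -> t < zero01 -> 0 < F t.
Proof.
move=> t_ge0 t_lt; have [/andP[_ zero_lt1] <-] := zero01_spec.
by apply: F_decr => //; exact: ltW.
Qed.

End DecreasingConcave.

Section FragileGame.
Variables (R : realType) (n m : nat) (Rr p : 'I_m -> R -> R) (a k : 'I_n -> R).
Hypothesis Rr_gt1 : forall j t, 0 <= t -> 1 < Rr j t.
Hypothesis p_at0 : forall j, p j 0 = 0.
Hypothesis p_ge1 : forall j t, 1 <= t -> p j t = 1.
Hypothesis a_itv : forall i, 0 < a i <= 1.
Hypothesis k_gt0 : forall i, 0 < k i.
Hypothesis F_cont : forall i j, {within `[0, 1], continuous (Feff Rr p a k i j)}.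
Hypothesis F_deriv : forall i j t, 0 < t < 1 ->
  derivable (Feff Rr p a k i j) t 1 /\
  derivable (derive1 (Feff Rr p a k i j)) t 1 /\
  derive1 (Feff Rr p a k i j) t < 0 /\
  derive1 (derive1 (Feff Rr p a k i j)) t < 0.

Local Notation F := (Feff Rr p a k).
Local Notation om := (omega Rr p a k).
Local Notation vartheta := (vartheta Rr p a k).
Local Notation utility := (utility Rr p a k).
Local Notation active := (active Rr p a k).
Local Notation GNE := (GNE Rr p a k).

Let F_derivable i j t (t01 : 0 < t < 1) := (@F_deriv i j t t01).1.
Let F'_derivable i j t (t01 : 0 < t < 1) := (@F_deriv i j t t01).2.1.
Let F'_lt0 i j t (t01 : 0 < t < 1) := (@F_deriv i j t t01).2.2.1.
Let F''_lt0 i j t (t01 : 0 < t < 1) := (@F_deriv i j t t01).2.2.2.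

Lemma Feff0_gt0 i j : 0 < F i j 0.
Proof.
rewrite /Feff p_at0 subr0 mulr1 mulr0 subr0 powR_gt0 // subr_gt0; exact: Rr_gt1.
Qed.

Lemma Feff1_lt0 i j : F i j 1 < 0.
Proof. by rewrite /Feff p_ge1 // subrr mulr0 sub0r mulr1 oppr_lt0. Qed.

Lemma omegaE i j : om i j = zero01 (F i j).
Proof. by []. Qed.

Lemma omega_spec i j : 0 < om i j < 1 /\ F i j (om i j) = 0.
Proof.
by rewrite omegaE; exact: zero01_spec (@F_cont i j) (Feff0_gt0 i j) (Feff1_lt0 i j).
Qed.

Lemma Feff_gt0 i j t : 0 <= t -> t < om i j -> 0 < F i j t.
Proof.
rewrite omegaE; exact: (F_gt0 (@F_cont i j) (@F_derivable i j) (@F'_lt0 i j)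
  (Feff0_gt0 i j) (Feff1_lt0 i j) (t := t)).
Qed.

Lemma xT_split (x : 'M[R]_(n, m)) i j : xT x j = x i j + xT_excl x i j.
Proof. by rewrite /xT /xT_excl (bigD1 i). Qed.

Lemma xT_excl_ge0 (x : 'M[R]_(n, m)) i j : Cn x -> 0 <= xT_excl x i j.
Proof. by move=> Cx; apply: sumr_ge0 => l _; have [/(_ j)/andP[]] := Cx l. Qed.

Definition row_upd (x : 'M[R]_(n, m)) i j t : 'I_m -> R :=
  fun j' => if j' == j then t else x i j'.

Lemma utility_row_upd (x : 'M[R]_(n, m)) i j t :
  utility i (row_upd x i j t) x = utility i (fun j' => x i j') x
    - x i j `^ a i * F i j (x i j + xT_excl x i j)
    + t `^ a i * F i j (t + xT_excl x i j).
Proof.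
rewrite /utility (bigD1 j) //= [X in _ = X - _ + _](bigD1 j) //= /row_upd eqxx.
under eq_bigr => j' /negbTE -> do [].
by rewrite [_ + _ - _]addrAC subrr add0r addrC.
Qed.

Lemma vartheta_row_upd (x : 'M[R]_(n, m)) i j t :
  Cn x -> vartheta i x (fun j' => x i j') -> active x i j ->
  0 <= t <= om i j - xT_excl x i j -> \sum_j' x i j' - x i j + t <= 1 ->
  vartheta i x (row_upd x i j t).
Proof.
move=> Cx [_ x_policy] x_active /andP[t_ge0 t_le] sum_le1.
have excl_ge0 := xT_excl_ge0 i j Cx; have [/andP[_ om_lt1] _] := omega_spec i j.
split; first split.
- move=> j'; rewrite /row_upd; case: eqP => _; last by have [] := Cx i.
  by rewrite t_ge0 /=; lra.
- rewrite (bigD1 j) //= /row_upd eqxx.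
  under eq_bigr => j' /negbTE -> do [].
  by move: sum_le1; rewrite [X in X - _ + _ <= _](bigD1 j) //=; lra.
- move=> j'; rewrite /row_upd; case: eqP => [->|_]; last exact: x_policy.
  by split=> [_|/(_ x_active)]; rewrite ?t_ge0.
Qed.

Lemma GNE_active (x : 'M[R]_(n, m)) i j : GNE x -> 0 < x i j -> active x i j.
Proof.
move=> [_ /(_ i)[[_ /(_ j)[_ inactive_eq0]] _]] x_gt0.
by apply: contrapT => /inactive_eq0 x_eq0; move: x_gt0; rewrite x_eq0 ltxx.
Qed.

Lemma GNE_best_response (x : 'M[R]_(n, m)) i j t : GNE x -> active x i j ->
  0 <= t <= om i j - xT_excl x i j -> \sum_j' x i j' - x i j + t <= 1 ->
  t `^ a i * F i j (t + xT_excl x i j) <=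
  x i j `^ a i * F i j (x i j + xT_excl x i j).
Proof.
move=> [Cx /(_ i)[x_feasible x_best]] x_active t_itv sum_le1.
have := x_best _ (vartheta_row_upd Cx x_feasible x_active t_itv sum_le1).
by rewrite utility_row_upd; lra.
Qed.

Lemma GNE_xT_lt_omega (x : 'M[R]_(n, m)) i j : GNE x -> 0 < x i j ->
  xT x j < om i j.
Proof.
move=> GNEx x_gt0; have x_active := GNE_active GNEx x_gt0.
have [Cx /(_ i)[[_ /(_ j)[/(_ x_active)/andP[_ x_le] _]] _]] := GNEx.
have [_ sum_le1] := Cx i; have excl_ge0 := xT_excl_ge0 i j Cx.
have := @GNE_best_response x i j (x i j / 2) GNEx x_active.
rewrite (xT_split x i); set c := xT_excl x i j in excl_ge0 x_le *; clearbody c.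
move=> half_le; rewrite ltNge; apply/negP => om_le.
have x_eq : x i j + c = om i j by lra.
have half_gt0 : 0 < (x i j / 2) `^ a i * F i j (x i j / 2 + c).
  by rewrite mulr_gt0 ?powR_gt0 ?Feff_gt0 //; lra.
by move: half_le; rewrite x_eq (omega_spec i j).2 mulr0; lra.
Qed.

(* The solution x of the first-order condition a_i F_ij(t) + x F_ij'(t) = 0. *)
Definition share i j t := - a i * F i j t / derive1 (F i j) t.

Lemma GNE_share (x : 'M[R]_(n, m)) i j : GNE x -> 0 < x i j ->
  \sum_j' x i j' < 1 -> x i j = share i j (xT x j).
Proof.
move=> GNEx x_gt0 sum_lt1; have x_active := GNE_active GNEx x_gt0.
have := GNE_xT_lt_omega GNEx x_gt0; rewrite /share (xT_split x i) => xT_lt_om.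
have excl_ge0 := xT_excl_ge0 i j GNEx.1.
have [/andP[_ om_lt1] _] := omega_spec i j; have /andP[a_gt0 _] := a_itv i.
pose b := Num.min (om i j - xT_excl x i j) (x i j + (1 - \sum_j' x i j')).
have [b_le_om b_le_slack] :
    b <= om i j - xT_excl x i j /\ b <= x i j + (1 - \sum_j' x i j').
  by split; rewrite ge_min lexx ?orbT.
have x_lt_b : x i j < b by rewrite lt_min; apply/andP; split; lra.
have F'_neg : derive1 (F i j) (x i j + xT_excl x i j) < 0 by apply: F'_lt0; lra.
have bc_le1 : b + xT_excl x i j <= 1 by lra.
have x_max t : 0 < t -> t < b -> t `^ a i * F i j (t + xT_excl x i j) <=
    x i j `^ a i * F i j (x i j + xT_excl x i j).
  by move=> t_gt0 t_lt_b; apply: GNE_best_response => //; lra.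
have /eqP := powR_mulF_max_stationary (@F_derivable i j) a_gt0 excl_ge0 x_gt0
  x_lt_b bc_le1 x_max.
rewrite addr_eq0 => /eqP stationary.
by rewrite mulNr stationary opprK mulfK ?lt_eqF.
Qed.

Lemma share_nonincr i j u v : 0 < u -> u < v -> v < om i j ->
  share i j v <= share i j u.
Proof.
move=> u_gt0 uv v_lt_om; have [/andP[_ om_lt1] _] := omega_spec i j.
have /andP[a_gt0 _] := a_itv i.
have Fv_gt0 : 0 < F i j v by apply: Feff_gt0; lra.
have Fvu : F i j v < F i j u.
  by apply: (F_decr (@F_cont i j) (@F_derivable i j) (@F'_lt0 i j)); lra.
have F'vu : derive1 (F i j) v < derive1 (F i j) u.
  by apply: (derive1F_decr (@F'_derivable i j) (@F''_lt0 i j)); lra.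
have F'u_lt0 : derive1 (F i j) u < 0 by apply: F'_lt0; lra.
rewrite /share -!mulrA !mulNr -!mulrN ler_pM2l // -!invrN.
apply: (@le_trans _ _ (F i j v / - derive1 (F i j) u)).
  by rewrite ler_pM2l // lef_pV2 ?posrE ?oppr_gt0 ?lerN2 ?ltW // (lt_trans F'vu).
by rewrite ler_pM2r ?invr_gt0 ?oppr_gt0 // ltW.
Qed.

Definition total_fixpoint j t :=
  0 < t /\ (forall i, t < om i j) /\ t = \sum_i share i j t.

Lemma total_fixpoint_unique j r s :
  total_fixpoint j r -> total_fixpoint j s -> r = s.
Proof.
move=> [r_gt0 [r_lt r_eq]] [s_gt0 [s_lt s_eq]].
apply: (@fixpoint_unique_nonincr _ [set t | 0 < t /\ forall i, t < om i j]
  (fun t => \sum_i share i j t)) => //.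
by move=> u v [u_gt0 _] [_ v_lt] uv; apply: ler_sum => i _; exact: share_nonincr.
Qed.

Definition interior_total j := xget 0 (total_fixpoint j).

Lemma GNE_interior (x : 'M[R]_(n, m)) : GNE x ->
  (forall i j, 0 < x i j) -> (forall i, \sum_j x i j < 1) ->
  forall i j, x i j = share i j (interior_total j).
Proof.
move=> GNEx x_gt0 sum_lt1 i j.
have xT_fixpoint : total_fixpoint j (xT x j).
  split; [|split].
  - by rewrite (xT_split x i) ltr_pwDl ?xT_excl_ge0 //; exact: GNEx.1.
  - by move=> i'; exact: GNE_xT_lt_omega.
  - by apply: eq_bigr => i' _; exact: GNE_share.
have -> : interior_total j = xT x j.
  exact: (total_fixpoint_unique (xgetPex 0 (ex_intro _ _ xT_fixpoint)) xT_fixpoint).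
exact: GNE_share.
Qed.

Lemma GNE_cases (x : 'M[R]_(n, m)) : GNE x ->
  [\/ exists i j, x i j = 0, exists i, \sum_j x i j = 1
    | forall i j, x i j = share i j (interior_total j)].
Proof.
move=> GNEx; have Cx := GNEx.1.
have [|no_zero] := pselect (exists i j, x i j = 0); first exact: Or31.
have [|no_full] := pselect (exists i, \sum_j x i j = 1); first exact: Or32.
apply/Or33/GNE_interior => // [i j|i].
- have [/(_ j)/andP[x_ge0 _] _] := Cx i; rewrite lt_neqAle x_ge0 andbT.
  by apply/eqP => x_eq0; apply: no_zero; exists i, j.
- have [_ sum_le1] := Cx i; rewrite lt_neqAle sum_le1 andbT.
  by apply/eqP => sum_eq1; apply: no_full; exists i.
Qed.

End FragileGame.

Theorem theorem4 (R : realType) (n m : nat)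
  (Rr p : 'I_m -> R -> R) (a k : 'I_n -> R) :
  (1 <= n)%N -> (1 <= m)%N -> (m <= n)%N ->
  (* return rates exceed 1, failure probabilities lie in [0,1] *)
  (forall j t, 0 <= t -> 1 < Rr j t) ->
  (forall j t, 0 <= t -> 0 <= p j t <= 1) ->
  (* Assumption (1) *)
  (forall j, p j 0 = 0) ->
  (forall j t, 1 <= t -> p j t = 1) ->
  (* Assumption (2) *)
  (forall i, 0 < a i <= 1) ->
  (forall i, 0 < k i) ->
  (* Assumption (3) *)
  (forall i j, {within `[0, 1], continuous (Feff Rr p a k i j)}) ->
  (forall i j t, 0 < t < 1 ->
     derivable (Feff Rr p a k i j) t 1 /\
     derivable (derive1 (Feff Rr p a k i j)) t 1 /\
     derive1 (Feff Rr p a k i j) t < 0 /\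
     derive1 (derive1 (Feff Rr p a k i j)) t < 0) ->
  lebesgue_null (GNE Rr p a k).
Proof.
move=> n_gt0 m_gt0 _ Rr_gt1 _ p_at0 p_ge1 a_itv k_gt0 F_cont F_deriv.
pose i0 : 'I_n := Ordinal n_gt0; pose j0 : 'I_m := Ordinal m_gt0.
(* The graphs of GNE_cases: a vanishing coordinate, a saturated row solved for
   its entry j0, and the interior, where x_(i0 j0) is a constant. *)
pose c (t : 'I_n * 'I_m + 'I_n + unit) := match t with
  | inl (inl ij) => ij | inl (inr i) => (i, j0) | inr _ => (i0, j0) end.
pose f (t : 'I_n * 'I_m + 'I_n + unit) (x : 'M[R]_(n, m)) := match t with
  | inl (inl _) => 0
  | inl (inr i) => 1 - \sum_(j | j != j0) x i j
  | inr _ => share Rr p a k i0 j0 (interior_total Rr p a k j0) end.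
apply: (@lebesgue_null_graphs _ _ _ _ c f m%:R) => //.
- move=> [[ij|i]|[]] x y d d_ge0 close /=; rewrite ?subrr ?normr0 ?mulr_ge0 //.
  rewrite opprB addrC addrA subrK distrC; apply: dist_sum_neq_le => // j j_neq.
  by apply: close; rewrite xpair_eqE eqxx.
- move=> x GNEx; split=> [i j|]; first by have [/(_ j)] := GNEx.1 i.
  have [[i [j x_eq0]]|[i sum_eq1]|x_share] :=
    GNE_cases Rr_gt1 p_at0 p_ge1 a_itv k_gt0 F_cont F_deriv GNEx.
  + by exists (inl (inl (i, j))).
  + by exists (inl (inr i)); rewrite /= -sum_eq1 (bigD1 j0) //= addrK.
  + by exists (inr tt); exact: x_share.
Qed.
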